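(* Skeptic can weakly force the event \[ E_2:=\{\xi\in\Omega:\ |s_n|>\sqrt n-1\ \text{for infinitely many } n\}. \]
   Context: Fair-coin game: in rounds $n=1,2,\dots$ Skeptic announces $M_n\in\mathbb{R}$ (depending only on $x_1,\dots,x_{n-1}$), then Reality announces $x_n\in\{-1,1\}$. A path is an infinite sequence $\xi=x_1x_2\cdots\in\{-1,1\}^{\mathbb{N}}$, and $\Omega$ is the set of paths. We write $s_n:=x_1+\cdots+x_n$, with $s_0=0$. A strategy $\mathcal{P}$ assigns a real bet $\mathcal{P}(x_1\cdots x_{n-1})$ to each finite sequence. Its capital process with zero initial capital is $\mathcal{K}^{\mathcal{P}}_n(\xi)=\sum_{k=1}^n\mathcal{P}(x_1\cdots x_{k-1})x_k$. Skeptic weakly forces $E\subseteq\Omega$ if there is a strategy $\mathcal{P}$ such that $\mathcal{K}^{\mathcal{P}}_n(\xi)\ge-1$ for all $\xi\in\Omega$ and $n\ge0$, and $\limsup_n\mathcal{K}^{\mathcal{P}}_n(\xi)=\infty$ for every $\xi\notin E$. *)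

From Stdlib Require Import Reals List.
Open Scope R_scope.

Definition move_val (b : bool) : R := if b then 1 else -1.

(* Paths: infinite sequences x_1 x_2 ...; x_{k+1} is stored at index k. *)
Definition path := nat -> bool.

Fixpoint prefix (xi : path) (n : nat) : list bool :=
  match n with
  | O => nil
  | S m => prefix xi m ++ (xi m :: nil)
  end.

Definition strategy := list bool -> R.

Fixpoint capital (P : strategy) (n : nat) (xi : path) : R :=
  match n with
  | O => 0
  | S m => capital P m xi + P (prefix xi m) * move_val (xi m)
  end.

Fixpoint partial_sum (xi : path) (n : nat) : R :=
  match n with
  | O => 0
  | S m => partial_sum xi m + move_val (xi m)
  end.

(* Skeptic weakly forces E. limsup_n K_n = +oo is written as
   "for every M and N there is n >= N with K_n > M". *)
Definition weakly_forces (E : path -> Prop) : Prop :=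
  exists P : strategy,
    (forall (xi : path) (n : nat), capital P n xi >= -1) /\
    (forall xi : path, ~ E xi ->
       forall (M : R) (N : nat), exists n : nat, (N <= n)%nat /\ capital P n xi > M).

Definition E2 (xi : path) : Prop :=
  forall N : nat, exists n : nat, (N <= n)%nat /\
    Rabs (partial_sum xi n) > sqrt (INR n) - 1.

From Stdlib Require Import Reals List Lra Lia Psatz.
From Stdlib Require Import Classical ClassicalDescription.
Open Scope R_scope.

(* The process n - s_n^2 is a martingale: betting -2 s_n on x_{n+1} changes the
   capital by exactly its increment.  On a path that stays in the band
   |s_n| <= sqrt n - 1 from time a onwards, the strategy that bets -2 s_n as long
   as the path has stayed in the band since time a therefore earns
   (n - s_n^2) - (a - s_a^2) >= 2 sqrt n - 1 - a, which tends to infinity, while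
   its loss is at most a whatever Reality does (leaving the band one step after
   being in it keeps n - s_n^2 nonnegative).  Mixing these strategies over all
   starting times a with weights 2^-(a+1)/(a+1) keeps the total loss below 1, and
   every path outside E_2 is eventually in the band. *)

Lemma length_prefix (xi : path) (k : nat) : length (prefix xi k) = k.
Proof. induction k; simpl; [reflexivity|]. rewrite length_app, IHk; simpl; lia. Qed.

Lemma nth_prefix (xi : path) (k j : nat) :
  (j < k)%nat -> nth j (prefix xi k) false = xi j.
Proof.
  induction k as [|k IHk]; intros Hj; [lia|]. simpl.
  destruct (Nat.eq_dec j k) as [->|Hne].
  - rewrite app_nth2; rewrite length_prefix; [|lia]. now rewrite Nat.sub_diag.
  - rewrite app_nth1; [apply IHk; lia | rewrite length_prefix; lia].
Qed.

Lemma partial_sum_ext (xi xi' : path) (k : nat) :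
  (forall j, (j < k)%nat -> xi j = xi' j) -> partial_sum xi k = partial_sum xi' k.
Proof.
  induction k as [|k IHk]; intros H; simpl; [reflexivity|].
  rewrite IHk by (intros; apply H; lia). now rewrite H by lia.
Qed.

Lemma Rabs_partial_sum_succ (xi : path) (n : nat) :
  Rabs (partial_sum xi (S n)) <= Rabs (partial_sum xi n) + 1.
Proof.
  simpl. eapply Rle_trans; [apply Rabs_triang|].
  destruct (xi n); simpl; unfold Rabs at 2; destruct Rcase_abs; lra.
Qed.

Definition quad_mart (xi : path) (n : nat) : R := INR n - partial_sum xi n ^ 2.

Lemma quad_mart_succ (xi : path) (n : nat) :
  quad_mart xi (S n) = quad_mart xi n - 2 * partial_sum xi n * move_val (xi n).
Proof. unfold quad_mart. rewrite S_INR. simpl. destruct (xi n); simpl; ring. Qed.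

Lemma quad_mart_le (xi : path) (n : nat) : quad_mart xi n <= INR n.
Proof. unfold quad_mart. pose proof (pow2_ge_0 (partial_sum xi n)). lra. Qed.

Definition in_band (xi : path) (n : nat) : Prop :=
  Rabs (partial_sum xi n) <= sqrt (INR n) - 1.

Lemma quad_mart_in_band (xi : path) (n : nat) :
  in_band xi n -> 2 * sqrt (INR n) - 1 <= quad_mart xi n.
Proof.
  unfold in_band, quad_mart. intros Hband.
  rewrite <- (pow2_abs (partial_sum xi n)).
  pose proof (sqrt_sqrt (INR n) (pos_INR n)).
  pose proof (Rabs_pos (partial_sum xi n)).
  assert (Rabs (partial_sum xi n) ^ 2 <= (sqrt (INR n) - 1) ^ 2)
    by (apply pow_incr; lra).
  nra.
Qed.

Lemma quad_mart_succ_nonneg (xi : path) (n : nat) :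
  in_band xi n -> 0 <= quad_mart xi (S n).
Proof.
  unfold in_band, quad_mart. intros Hband.
  rewrite <- (pow2_abs (partial_sum xi (S n))), S_INR.
  pose proof (Rabs_partial_sum_succ xi n).
  pose proof (sqrt_sqrt (INR n) (pos_INR n)).
  pose proof (Rabs_pos (partial_sum xi (S n))).
  assert (Rabs (partial_sum xi (S n)) ^ 2 <= sqrt (INR n) ^ 2)
    by (apply pow_incr; lra).
  nra.
Qed.

Lemma not_E2_eventually_in_band (xi : path) :
  ~ E2 xi -> exists a, forall n, (a <= n)%nat -> in_band xi n.
Proof.
  intros HnE. apply NNPP. intros Hnone. apply HnE. intros N.
  apply NNPP. intros HnoN. apply Hnone. exists N. intros n Hn.
  apply Rnot_lt_le. intros Hout. apply HnoN. now exists n.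
Qed.

Definition band_run (xi : path) (a k : nat) : Prop :=
  (a <= k)%nat /\ forall j, (a <= j <= k)%nat -> in_band xi j.

Definition band_bet (xi : path) (a k : nat) : R :=
  if excluded_middle_informative (band_run xi a k) then -2 * partial_sum xi k else 0.

Fixpoint band_capital (xi : path) (a n : nat) : R :=
  match n with
  | O => 0
  | S m => band_capital xi a m + band_bet xi a m * move_val (xi m)
  end.

Lemma band_bet_ext (xi xi' : path) (a k : nat) :
  (forall j, (j < k)%nat -> xi j = xi' j) -> band_bet xi a k = band_bet xi' a k.
Proof.
  intros Hagree.
  assert (Hrun : band_run xi a k <-> band_run xi' a k).
  { unfold band_run, in_band.
    split; intros [Hak Hj]; split; auto; intros j Hjk; specialize (Hj j Hjk);
      rewrite (partial_sum_ext xi xi' j) in * by (intros; apply Hagree; lia);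
      exact Hj. }
  unfold band_bet. rewrite (partial_sum_ext xi xi' k Hagree).
  destruct (excluded_middle_informative (band_run xi a k));
    destruct (excluded_middle_informative (band_run xi' a k)); tauto.
Qed.

Lemma band_capital_before (xi : path) (a n : nat) :
  (n <= a)%nat -> band_capital xi a n = 0.
Proof.
  induction n as [|n IHn]; intros Hn; simpl; [reflexivity|].
  rewrite IHn by lia. unfold band_bet.
  destruct (excluded_middle_informative (band_run xi a n)) as [[Han _]|]; [lia|ring].
Qed.

Lemma band_capital_run (xi : path) (a n : nat) :
  (a <= n)%nat -> (forall j, (a <= j < n)%nat -> in_band xi j) ->
  band_capital xi a n = quad_mart xi n - quad_mart xi a.
Proof.
  induction n as [|n IHn]; intros Han Hband.
  - replace a with 0%nat by lia. simpl. ring.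
  - destruct (Nat.eq_dec a (S n)) as [->|Hne].
    + rewrite band_capital_before by lia. ring.
    + simpl. rewrite IHn by (lia || (intros; apply Hband; lia)).
      unfold band_bet. destruct (excluded_middle_informative (band_run xi a n)) as [_|Hnot].
      * rewrite quad_mart_succ. ring.
      * exfalso. apply Hnot. split; [lia|]. intros; apply Hband; lia.
Qed.

Lemma band_capital_ge (xi : path) (a n : nat) : - INR a <= band_capital xi a n.
Proof.
  induction n as [|n IHn].
  - simpl. pose proof (pos_INR a). lra.
  - destruct (excluded_middle_informative (band_run xi a n)) as [[Han Hrun]|Hnot].
    + rewrite band_capital_run by (lia || (intros; apply Hrun; lia)).
      pose proof (quad_mart_succ_nonneg xi n (Hrun n ltac:(lia))).
      pose proof (quad_mart_le xi a). lra.
    + simpl. unfold band_bet.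
      destruct (excluded_middle_informative (band_run xi a n)); [tauto|lra].
Qed.

Lemma band_capital_eventually (xi : path) (a n : nat) :
  (forall j, (a <= j)%nat -> in_band xi j) -> (a <= n)%nat ->
  2 * sqrt (INR n) - 1 - INR a <= band_capital xi a n.
Proof.
  intros Hband Han. rewrite band_capital_run by (auto; intros; apply Hband; lia).
  pose proof (quad_mart_in_band xi n (Hband n Han)).
  pose proof (quad_mart_le xi a). lra.
Qed.

Definition weight (a : nat) : R := (/2) ^ S a / (INR a + 1).

Lemma weight_pos (a : nat) : 0 < weight a.
Proof.
  unfold weight. pose proof (pos_INR a).
  apply Rdiv_lt_0_compat; [apply pow_lt|]; lra.
Qed.

Lemma weight_mul_INR_le (a : nat) : weight a * INR a <= (/2) ^ S a.
Proof.
  unfold weight. pose proof (pos_INR a). pose proof (pow_lt (/2) (S a) ltac:(lra)).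
  apply (Rmult_le_reg_r (INR a + 1)); [lra|].
  field_simplify; [nra|lra].
Qed.

Lemma sum_weight_mul_INR_le (n : nat) :
  sum_f_R0 (fun a => weight a * INR a) n <= 1.
Proof.
  apply Rle_trans with (sum_f_R0 (fun a => (/2) ^ S a) n).
  - apply sum_Rle. intros a _. apply weight_mul_INR_le.
  - assert (Hgeom : sum_f_R0 (fun a => (/2) ^ S a) n = 1 - (/2) ^ S n).
    { induction n as [|n IHn]; simpl in *; [field|]. rewrite IHn. field. }
    rewrite Hgeom. pose proof (pow_lt (/2) (S n) ltac:(lra)). lra.
Qed.

(* A finite history is read as a path padded with -1; the padding is never
   consulted, because band_bet xi a k depends only on x_1 ... x_k. *)
Definition history_path (l : list bool) : path := fun j => nth j l false.

Definition mixture : strategy :=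
  fun l => sum_f_R0 (fun a => weight a * band_bet (history_path l) a (length l)) (length l).

Lemma mixture_prefix (xi : path) (k : nat) :
  mixture (prefix xi k) = sum_f_R0 (fun a => weight a * band_bet xi a k) k.
Proof.
  unfold mixture. rewrite length_prefix. apply sum_eq. intros a _.
  f_equal. apply band_bet_ext. intros j Hj. apply nth_prefix, Hj.
Qed.

Lemma capital_mixture (xi : path) (n : nat) :
  capital mixture n xi = sum_f_R0 (fun a => weight a * band_capital xi a n) n.
Proof.
  induction n as [|n IHn]; [simpl; ring|].
  simpl capital. rewrite IHn, mixture_prefix. simpl sum_f_R0 at 2.
  rewrite tech5, (band_capital_before xi (S n) (S n)) by lia.
  rewrite Rmult_comm, scal_sum, <- plus_sum, Rmult_0_r, Rplus_0_r.
  apply sum_eq. intros a _. simpl. ring.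
Qed.

Lemma sum_f_R0_ge_term (u : nat -> R) (a n : nat) :
  (forall b, 0 <= u b) -> (a <= n)%nat -> u a <= sum_f_R0 u n.
Proof.
  intros Hu. induction n as [|n IHn]; intros Han.
  - replace a with 0%nat by lia. simpl. lra.
  - simpl. pose proof (Hu (S n)). destruct (Nat.eq_dec a (S n)) as [->|Hne].
    + pose proof (cond_pos_sum u n Hu). lra.
    + pose proof (IHn ltac:(lia)). lra.
Qed.

Lemma capital_mixture_split (xi : path) (n : nat) :
  capital mixture n xi =
  sum_f_R0 (fun a => weight a * (band_capital xi a n + INR a)) n
  - sum_f_R0 (fun a => weight a * INR a) n.
Proof. rewrite capital_mixture, <- minus_sum. apply sum_eq. intros; ring. Qed.

Lemma weighted_shifted_capital_nonneg (xi : path) (n a : nat) :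
  0 <= weight a * (band_capital xi a n + INR a).
Proof.
  apply Rmult_le_pos; [apply Rlt_le, weight_pos|].
  pose proof (band_capital_ge xi a n). lra.
Qed.

Lemma capital_mixture_ge (xi : path) (n : nat) : capital mixture n xi >= -1.
Proof.
  rewrite capital_mixture_split.
  pose proof (cond_pos_sum _ n (weighted_shifted_capital_nonneg xi n)).
  pose proof (sum_weight_mul_INR_le n). lra.
Qed.

Lemma capital_mixture_ge_component (xi : path) (a n : nat) :
  (a <= n)%nat -> weight a * band_capital xi a n - 1 <= capital mixture n xi.
Proof.
  intros Han. rewrite capital_mixture_split.
  pose proof (sum_f_R0_ge_term _ a n (weighted_shifted_capital_nonneg xi n) Han).
  pose proof (sum_weight_mul_INR_le n).
  pose proof (weight_pos a). pose proof (pos_INR a). nra.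
Qed.

Lemma sqrt_INR_unbounded (X : R) (N : nat) :
  exists n, (N <= n)%nat /\ X < sqrt (INR n).
Proof.
  destruct (INR_unbounded (Rmax X 0 ^ 2)) as [m Hm].
  exists (N + m)%nat. split; [lia|].
  assert (INR m <= INR (N + m)) by (apply le_INR; lia).
  pose proof (Rmax_l X 0). pose proof (Rmax_r X 0).
  apply Rle_lt_trans with (sqrt (Rmax X 0 ^ 2)).
  - rewrite sqrt_pow2; lra.
  - apply sqrt_lt_1_alt. split; [apply pow2_ge_0|lra].
Qed.

Theorem theorem2 : weakly_forces E2.
Proof.
  exists mixture. split; [exact capital_mixture_ge|].
  intros xi HnE M N.
  destruct (not_E2_eventually_in_band xi HnE) as [a Hband].
  pose proof (weight_pos a) as Hw.
  destruct (sqrt_INR_unbounded (((M + 1) / weight a + 1 + INR a) / 2) (N + a))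
    as [n [Hn Hsqrt]].
  exists n. split; [lia|].
  pose proof (capital_mixture_ge_component xi a n ltac:(lia)).
  pose proof (band_capital_eventually xi a n Hband ltac:(lia)).
  assert (Hgain : M + 1 < weight a * (2 * sqrt (INR n) - 1 - INR a)).
  { replace (M + 1) with (weight a * ((M + 1) / weight a)) by (field; lra).
    apply Rmult_lt_compat_l; lra. }
  nra.
Qed.
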